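(* For every integer $n\ge 0$, $$\sum_{j,k}\genfrac{[}{]}{0pt}{}{n}{k}\genfrac{\{}{\}}{0pt}{}{k}{j}\binom{n}{j}(-1)^k=(-1)^n .$$
   Context: Here $\genfrac{[}{]}{0pt}{}{n}{k}$ denotes the unsigned (absolute) Stirling number of the first kind and $\genfrac{\{}{\}}{0pt}{}{n}{k}$ the ordinary Stirling number of the second kind (Knuth's notation), with $\genfrac{[}{]}{0pt}{}{0}{0}=\genfrac{\{}{\}}{0pt}{}{0}{0}=1$, $\genfrac{[}{]}{0pt}{}{n}{0}=\genfrac{\{}{\}}{0pt}{}{n}{0}=0$ for $n>0$, and $\genfrac{[}{]}{0pt}{}{n}{k}=\genfrac{\{}{\}}{0pt}{}{n}{k}=0$ for $0\le n<k$. The double sum is over all integers $j,k$ with $0\le j\le k\le n$. *)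

From mathcomp Require Import all_boot all_order all_algebra.
Set Implicit Arguments. Unset Strict Implicit. Unset Printing Implicit Defensive.

Fixpoint stirling1 (n k : nat) : nat :=
  match n, k with
  | 0, 0 => 1
  | 0, _.+1 => 0
  | _.+1, 0 => 0
  | n'.+1, k'.+1 => n' * stirling1 n' k'.+1 + stirling1 n' k'
  end.

Fixpoint stirling2 (n k : nat) : nat :=
  match n, k with
  | 0, 0 => 1
  | 0, _.+1 => 0
  | _.+1, 0 => 0
  | n'.+1, k'.+1 => k'.+1 * stirling2 n' k'.+1 + stirling2 n' k'
  end.

(* Writing (-1)^k = (-1)^n (-1)^(n+k) and summing over k first, the double
   sum becomes (-1)^n \sum_j 'C(n, j) M(n, j), where M = s S is the product of
   the matrices of signed Stirling numbers of the first kind and of Stirling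
   numbers of the second kind.  These matrices are mutually inverse: the two
   recurrences give M(n+1, j+1) = (j+1 - n) M(n, j+1) + M(n, j), whence M is the
   identity by induction on n.  Only j = n survives, contributing (-1)^n. *)
From mathcomp Require Import all_boot all_order all_algebra.
From mathcomp Require Import ring.
Import GRing.Theory.
Local Open Scope ring_scope.

Lemma stirling1_eq0 n k : (n < k)%N -> stirling1 n k = 0%N.
Proof.
elim: n k => [|n IHn] [|k] //= ltnk.
by rewrite !IHn ?muln0 // ltnW.
Qed.

Lemma stirling2_eq0 n k : (n < k)%N -> stirling2 n k = 0%N.
Proof.
elim: n k => [|n IHn] [|k] //= ltnk.
by rewrite !IHn ?muln0 // ltnW.
Qed.

Lemma big_ord_shift1 (R : nmodType) n (F : nat -> R) :
  F 0%N = 0 -> F n.+1 = 0 ->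
  \sum_(i < n.+1) F i.+1 = \sum_(i < n.+1) F i.
Proof.
move=> F0 Fn1.
by rewrite big_ord_recr big_ord_recl /= Fn1 F0 addr0 add0r.
Qed.

Lemma big_ord_widen_vanishing (R : nmodType) m n (F : nat -> R) :
  (m <= n)%N -> (forall i, (m <= i)%N -> F i = 0) ->
  \sum_(i < m) F i = \sum_(i < n) F i.
Proof.
move=> lemn Fm0; rewrite (big_ord_widen n F lemn) big_mkcond.
by apply: eq_bigr => i _; case: ltnP => // /Fm0.
Qed.

Section StirlingInverse.

Variable R : comNzRingType.

Definition stirling_prod n j : R :=
  \sum_(k < n.+1) (-1) ^+ (n + k) * (stirling1 n k * stirling2 k j)%:R.

Lemma stirling_prodS0 n : stirling_prod n.+1 0 = 0.
Proof.
by apply: big1 => -[[|k] ?] _ /=; rewrite ?muln0 ?mul0n mulr0.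
Qed.

Lemma stirling_prodSS n j :
  stirling_prod n.+1 j.+1
    = (j.+1%:R - n%:R) * stirling_prod n j.+1 + stirling_prod n j.
Proof.
pose G i j : R := (-1) ^+ (n + i) * (stirling1 n i * stirling2 i j)%:R.
have stirling1S_split (i : 'I_n.+1) :
    (-1) ^+ (n.+1 + i.+1) * (stirling1 n.+1 i.+1 * stirling2 i.+1 j.+1)%:R
  = - n%:R * G i.+1 j.+1 + (j.+1%:R * G i j.+1 + G i j).
  rewrite /G [stirling1 _.+1 _.+1]/= [stirling2 i.+1 j.+1]/=.
  by rewrite !natrM !natrD !natrM !addnS !exprS; ring.
rewrite /stirling_prod big_ord_recl [stirling1 n.+1 0]/= mul0n mulr0 add0r.
rewrite (eq_bigr _ (fun i _ => stirling1S_split i)) !big_split -!mulr_sumr /=.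
rewrite (@big_ord_shift1 _ _ (G^~ j.+1)).
- by rewrite -/(stirling_prod n j.+1); ring.
- by rewrite /G [stirling2 0 _]/= muln0 mulr0.
- by rewrite /G stirling1_eq0 // mul0n mulr0.
Qed.

Lemma stirling_prod_delta n j : stirling_prod n j = (n == j)%:R.
Proof.
elim: n j => [|n IHn] [|j].
- by rewrite /stirling_prod big_ord1 mul1r.
- by rewrite /stirling_prod big_ord1 [stirling2 _ _]/= muln0 mulr0.
- exact: stirling_prodS0.
rewrite stirling_prodSS !IHn eqSS.
have [-> | _] := eqVneq n j.+1; last by rewrite mulr0 add0r.
by rewrite subrr mul0r add0r eqn_leq ltnn.
Qed.

Lemma stirling_binomial_sum_prod n :
  \sum_(k < n.+1) \sum_(j < k.+1)
     ((stirling1 n k * stirling2 k j * 'C(n, j))%:R * (-1) ^+ k : R)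
  = (-1) ^+ n * \sum_(j < n.+1) 'C(n, j)%:R * stirling_prod n j.
Proof.
pose F k j : R := (stirling1 n k * stirling2 k j * 'C(n, j))%:R * (-1) ^+ k.
have widen_j (k : 'I_n.+1) : \sum_(j < k.+1) F k j = \sum_(j < n.+1) F k j.
  apply: (@big_ord_widen_vanishing _ _ _ (F k) (ltn_ord k)) => j ltkj.
  by rewrite /F stirling2_eq0 // muln0 mul0n mul0r.
rewrite (eq_bigr _ (fun k _ => widen_j k)) exchange_big mulr_sumr.
apply: eq_bigr => j _; rewrite /stirling_prod !mulr_sumr.
apply: eq_bigr => k _.
have sign_k : (-1) ^+ k = (-1) ^+ n * (-1) ^+ (n + k) :> R.
  by rewrite exprD signrMK.
by rewrite /F sign_k !natrM; ring.
Qed.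

End StirlingInverse.

Theorem mainTheorem2 (n : nat) :
  \sum_(k < n.+1) \sum_(j < k.+1)
     ((stirling1 n k * stirling2 k j * 'C(n, j))%:R * (-1) ^+ k : int)
  = (-1) ^+ n.
Proof.
rewrite stirling_binomial_sum_prod (bigD1 ord_max) //= big1 => [|j neqjn].
  by rewrite stirling_prod_delta eqxx binn mul1r addr0 mulr1.
have /negbTE neqnj : n != j by rewrite eq_sym; exact: neqjn.
by rewrite stirling_prod_delta neqnj mulr0.
Qed.
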